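(* Let $(X,d)$ be a metric space and let $\ell:X\to[0,+\infty)$ be a lower semicontinuous function with $\inf_X\ell=0$. Then: (i) if $\lambda>0$, the equation $(\mathcal{G}_\lambda)$ has at least one solution in $\mathrm{LSC}(X)$; (ii) if $\ell$ satisfies hypothesis $(H_0)$, then $(\mathcal{G}_0)$ has at least one solution in $\mathrm{LSC}(X)$. In addition, if $X$ is complete, then $(\mathcal{G}_0)$ has a solution if and only if $\ell$ satisfies $(H_0)$.
   Context: Global slope: $G[u](x)=\sup_{y\neq x}\frac{(u(x)-u(y))_+}{d(x,y)}$ if $u(x)<+\infty$, $G[u](x)=+\infty$ otherwise. For $\lambda\ge0$, equation $(\mathcal{G}_\lambda)$: $\lambda u+G[u]=\ell$ on $X$ with $\inf_X u=0$. A solution is a lower semicontinuous $u:X\to\mathbb{R}\cup\{+\infty\}$ with $\inf_X u=0$ and $\lambda u(x)+G[u](x)=\ell(x)$ for all $x\in X$. $\mathrm{LSC}(X)$ denotes the set of real-valued lower semicontinuous functions on $X$. Hypothesis $(H_0)$: there is a sequence $\{\bar x_n\}_n\subset X$ with $\sum_{n=0}^\infty\ell(\bar x_n)d(\bar x_n,\bar x_{n+1})<+\infty$ and $\lim_{n\to\infty}\ell(\bar x_n)=0$. *)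

From Stdlib Require Import Reals.
From Coquelicot Require Import Coquelicot.
Open Scope R_scope.

Definition is_metric {X : Type} (d : X -> X -> R) : Prop :=
  (forall x y, 0 <= d x y) /\
  (forall x y, d x y = 0 <-> x = y) /\
  (forall x y, d x y = d y x) /\
  (forall x y z, d x z <= d x y + d y z).

Definition metric_complete {X : Type} (d : X -> X -> R) : Prop :=
  forall s : nat -> X,
    (forall eps, 0 < eps -> exists N, forall m n, (N <= m)%nat -> (N <= n)%nat ->
        d (s m) (s n) < eps) ->
    exists x, forall eps, 0 < eps -> exists N, forall n, (N <= n)%nat -> d (s n) x < eps.

Definition lsc_Rbar {X : Type} (d : X -> X -> R) (u : X -> Rbar) : Prop :=
  forall x (c : R), Rbar_lt (Finite c) (u x) ->
    exists delta, 0 < delta /\ forall y, d x y < delta -> Rbar_lt (Finite c) (u y).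

Definition lsc_R {X : Type} (d : X -> X -> R) (f : X -> R) : Prop :=
  lsc_Rbar d (fun x => Finite (f x)).

Definition inf_is_zero {X : Type} (u : X -> Rbar) : Prop :=
  (forall x, Rbar_le (Finite 0) (u x)) /\
  (forall eps, 0 < eps -> exists x, Rbar_lt (u x) (Finite eps)).

(* For u(x) = a finite: the reals z with z <= 0 or z <= (a - u y)/d(x,y) for some y <> x.
   Its supremum (in [0,+oo]) is sup_{y<>x} (u(x)-u(y))_+ / d(x,y). *)
Definition slope_set {X : Type} (d : X -> X -> R) (u : X -> Rbar) (x : X) (a : R)
  (z : R) : Prop :=
  z <= 0 \/ exists y, y <> x /\ Rbar_le (Rbar_plus (u y) (Finite (z * d x y))) (Finite a).

Definition global_slope {X : Type} (d : X -> X -> R) (u : X -> Rbar) (x : X) : Rbar :=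
  match u x with
  | Finite a => Lub_Rbar (slope_set d u x a)
  | _ => p_infty
  end.

Definition is_solution {X : Type} (d : X -> X -> R) (lam : R) (ell : X -> R)
  (u : X -> Rbar) : Prop :=
  lsc_Rbar d u /\ inf_is_zero u /\
  forall x, Rbar_plus (Rbar_mult (Finite lam) (u x)) (global_slope d u x) = Finite (ell x).

Definition has_LSC_solution {X : Type} (d : X -> X -> R) (lam : R) (ell : X -> R) : Prop :=
  exists v : X -> R, lsc_R d v /\ is_solution d lam ell (fun x => Finite (v x)).

Definition H0 {X : Type} (d : X -> X -> R) (ell : X -> R) : Prop :=
  exists xs : nat -> X,
    ex_series (fun n => ell (xs n) * d (xs n) (xs (S n))) /\
    is_lim_seq (fun n => ell (xs n)) 0.

(* Both solutions are value functions of control problems in which moving from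
   [x] to [y] costs [ell x * d x y].  For [lam > 0] the value is the infimum over
   finite chains of a discounted cost: stopping at [x] costs [ell x / lam], and a
   jump of length [r] discounts the rest of the chain by [1 / (1 + lam r)].  For
   [lam = 0] it is the infimum of [sum ell(x_n) d(x_n, x_(n+1))] over paths along
   which [ell] tends to [0]; (H0) says that such paths exist.  Dynamic programming
   gives the slope bound [u x - u y <= (ell x - lam u x) d x y].  For the reverse
   bound, lower semicontinuity of [ell] forces a nearly optimal chain from [x] to
   leave a small ball around [x] while paying almost [ell x] per unit length; its
   exit point shows that the slope [ell x - lam u x] is attained.
   If [X] is complete and [u] solves the equation for [lam = 0], Ekeland's
   variational principle with parameters [2^-n] yields points [x_n] with
   [ell(x_n) <= 2^-n] and [u(x_(n+1)) + 2^-(n+1) d(x_n, x_(n+1)) <= u(x_n)], so the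
   series in (H0) is dominated by a telescoping sum. *)

From Stdlib Require Import Reals Lra Lia Psatz List.
From Stdlib Require Import Classical ClassicalEpsilon FunctionalExtensionality.
From Coquelicot Require Import Coquelicot.
Open Scope R_scope.

Definition real_inf (E : R -> Prop) : R := real (Glb_Rbar E).

Section RealInf.

Variable E : R -> Prop.
Hypothesis E_inhabited : exists e, E e.
Hypothesis E_nonneg : forall e, E e -> 0 <= e.

Lemma Glb_Rbar_finite : Glb_Rbar E = Finite (real_inf E).
Proof.
  destruct E_inhabited as [e0 He0]. destruct (Glb_Rbar_correct E) as [Hlb Hgr].
  assert (Hge0 : Rbar_le 0 (Glb_Rbar E)) by (apply Hgr; intros e He; exact (E_nonneg e He)).
  specialize (Hlb e0 He0). unfold real_inf.
  destruct (Glb_Rbar E); easy.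
Qed.

Lemma real_inf_le e : E e -> real_inf E <= e.
Proof.
  intro He. destruct (Glb_Rbar_correct E) as [Hlb _].
  specialize (Hlb e He). rewrite Glb_Rbar_finite in Hlb. exact Hlb.
Qed.

Lemma real_inf_nonneg : 0 <= real_inf E.
Proof.
  destruct (Glb_Rbar_correct E) as [_ Hgr].
  assert (H : Rbar_le 0 (Glb_Rbar E)) by (apply Hgr; intros e He; exact (E_nonneg e He)).
  rewrite Glb_Rbar_finite in H. exact H.
Qed.

Lemma real_inf_approx eta : 0 < eta -> exists e, E e /\ e < real_inf E + eta.
Proof.
  intro Heta. apply NNPP. intro Hno.
  destruct (Glb_Rbar_correct E) as [_ Hgr].
  assert (H : Rbar_le (real_inf E + eta) (Glb_Rbar E)).
  { apply Hgr. intros e He. apply Rnot_lt_le. intro Hlt. apply Hno. now exists e. }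
  rewrite Glb_Rbar_finite in H. simpl in H. lra.
Qed.

End RealInf.

Lemma Series_nonneg (a : nat -> R) : (forall n, 0 <= a n) -> ex_series a -> 0 <= Series a.
Proof.
  intros Ha Hex.
  rewrite <- (Rmult_0_l (Series a)), <- Series_scal_l.
  apply Series_le; [intro n; rewrite Rmult_0_l; split; [lra|auto]|exact Hex].
Qed.

Lemma least_index (P : nat -> Prop) n : P n -> exists m, P m /\ forall i, (i < m)%nat -> ~ P i.
Proof.
  intro Hn.
  destruct (Wf_nat.dec_inh_nat_subset_has_unique_least_element P (fun n => classic (P n)))
    as [m [[Hm Hleast] _]]; [now exists n|].
  exists m. split; [exact Hm|]. intros i Hi Hi'. specialize (Hleast i Hi'). lia.
Qed.

Lemma ex_series_telescoping_bound (a b : nat -> R) :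
  (forall n, 0 <= a n) -> (forall n, 0 <= b n) -> (forall n, a n <= b n - b (S n)) ->
  ex_series a.
Proof.
  intros Ha Hb Hab.
  assert (Hpartial : forall n, sum_n a n <= b O - b (S n)).
  { induction n as [|n IH]; [rewrite sum_O; apply Hab|].
    rewrite sum_Sn. specialize (Hab (S n)). unfold plus; simpl. lra. }
  destruct (ex_finite_lim_seq_incr (sum_n a) (b O)) as [l Hl].
  - intro n. rewrite sum_Sn. specialize (Ha (S n)). unfold plus; simpl. lra.
  - intro n. specialize (Hpartial n). specialize (Hb (S n)). lra.
  - now exists l.
Qed.

Lemma pow_half_pos k : 0 < (/ 2) ^ k.
Proof. apply pow_lt. lra. Qed.

Lemma pow_half_lt t : 0 < t -> exists k, (/ 2) ^ k < t.
Proof.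
  intro Ht. destruct (pow_lt_1_zero (/ 2)) with (y := t) as [N HN]; auto.
  { rewrite Rabs_right; lra. }
  exists N. specialize (HN N (le_n N)).
  rewrite Rabs_right in HN; [exact HN|apply Rle_ge, Rlt_le, pow_half_pos].
Qed.

Section MetricSpace.

Variables (X : Type) (d : X -> X -> R).
Hypothesis d_metric : is_metric d.

Lemma dist_ge0 x y : 0 <= d x y.
Proof. apply d_metric. Qed.

Lemma dist_self x : d x x = 0.
Proof. apply d_metric. reflexivity. Qed.

Lemma dist_sym x y : d x y = d y x.
Proof. apply d_metric. Qed.

Lemma dist_triangle x y z : d x z <= d x y + d y z.
Proof. apply d_metric. Qed.

Lemma dist_pos x y : y <> x -> 0 < d x y.
Proof.
  intro Hne. destruct (dist_ge0 x y) as [H|H]; [exact H|].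
  exfalso. apply Hne. symmetry. apply d_metric. now symmetry.
Qed.

Lemma dist_pos_neq x y : 0 < d x y -> y <> x.
Proof. intros H ->. rewrite dist_self in H. lra. Qed.

Section GlobalSlope.

Variables (u : X -> R) (x : X).

Let slopes := slope_set d (fun x => Finite (u x)) x (u x).

Lemma global_slope_Finite :
  global_slope d (fun x => Finite (u x)) x = Lub_Rbar slopes.
Proof. reflexivity. Qed.

Lemma global_slope_le a : 0 <= a -> (forall y, y <> x -> u x <= u y + a * d x y) ->
  Rbar_le (global_slope d (fun x => Finite (u x)) x) a.
Proof.
  intros Ha Hslope. rewrite global_slope_Finite.
  apply (proj2 (Lub_Rbar_correct slopes)).
  intros z [Hz|[y [Hy Hle]]]; simpl in *; [lra|].
  specialize (Hslope y Hy). pose proof (dist_pos x y Hy).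
  apply Rnot_lt_le. intro Hlt.
  assert (a * d x y < z * d x y) by (apply Rmult_lt_compat_r; auto). lra.
Qed.

Lemma global_slope_ge a :
  (forall z, 0 < z < a -> exists y, y <> x /\ u y + z * d x y <= u x) ->
  Rbar_le a (global_slope d (fun x => Finite (u x)) x).
Proof.
  intro Hdescent. rewrite global_slope_Finite.
  destruct (Lub_Rbar_correct slopes) as [Hub _].
  assert (Hge0 : Rbar_le 0 (Lub_Rbar slopes)) by (apply Hub; left; lra).
  destruct (Lub_Rbar slopes) as [b| |]; simpl in *; try easy.
  apply Rnot_lt_le. intro Hlt.
  destruct (Hdescent ((a + b) / 2)) as [y [Hy Hle]]; [lra|].
  assert (Hz : slopes ((a + b) / 2)) by (right; exists y; split; [exact Hy|simpl; lra]).
  specialize (Hub _ Hz). simpl in Hub. lra.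
Qed.

End GlobalSlope.

Lemma lsc_R_of_slope_bound (u k : X -> R) :
  (forall x, 0 <= k x) -> (forall x y, u x <= u y + k x * d x y) -> lsc_R d u.
Proof.
  intros Hk Hslope x c Hc. simpl in Hc.
  exists ((u x - c) / (k x + 1)). split.
  - apply Rdiv_lt_0_compat; [lra|specialize (Hk x); lra].
  - intros y Hy. simpl. specialize (Hslope x y). specialize (Hk x).
    pose proof (dist_ge0 x y).
    assert (d x y * (k x + 1) < u x - c).
    { apply (Rmult_lt_compat_r (k x + 1)) in Hy; [|lra].
      unfold Rdiv in Hy. rewrite Rmult_assoc, Rinv_l in Hy; lra. }
    nra.
Qed.

Lemma has_LSC_solution_of_descent (lam : R) (ell u : X -> R) :
  (forall x, 0 <= u x) ->
  (forall eps, 0 < eps -> exists x, u x < eps) ->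
  (forall x, lam * u x <= ell x) ->
  (forall x y, u x <= u y + (ell x - lam * u x) * d x y) ->
  (forall x z, 0 < z < ell x - lam * u x -> exists y, y <> x /\ u y + z * d x y <= u x) ->
  has_LSC_solution d lam ell.
Proof.
  intros Hu0 Hinf Hbound Hslope Hdescent.
  assert (Hlsc : lsc_R d u).
  { apply (lsc_R_of_slope_bound u (fun x => ell x - lam * u x)); auto.
    intro x. specialize (Hbound x). lra. }
  exists u. split; [exact Hlsc|split; [exact Hlsc|split; [split; [exact Hu0|exact Hinf]|]]].
  intro x.
  assert (HG : global_slope d (fun x => Finite (u x)) x = ell x - lam * u x).
  { apply Rbar_le_antisym.
    - apply global_slope_le; [specialize (Hbound x); lra|]. intros y _. apply Hslope.
    - apply global_slope_ge. apply Hdescent. }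
  rewrite HG. simpl. f_equal. ring.
Qed.

Section Discounted.

Variables (ell : X -> R) (lam : R).
Hypothesis ell_nonneg : forall x, 0 <= ell x.
Hypothesis ell_lsc : lsc_R d ell.
Hypothesis lam_pos : 0 < lam.

Fixpoint chain_cost (x : X) (c : list X) : R :=
  match c with
  | nil => ell x / lam
  | y :: c' => (ell x * d x y + chain_cost y c') / (1 + lam * d x y)
  end.

Lemma chain_cost_nonneg x c : 0 <= chain_cost x c.
Proof.
  revert x. induction c as [|y c IH]; intro x; simpl.
  - apply Rdiv_le_0_compat; [apply ell_nonneg|exact lam_pos].
  - pose proof (dist_ge0 x y). pose proof (ell_nonneg x). pose proof (IH y).
    apply Rdiv_le_0_compat; nra.
Qed.

Lemma chain_cost_cons x y c :
  chain_cost x (y :: c) * (1 + lam * d x y) = ell x * d x y + chain_cost y c.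
Proof. pose proof (dist_ge0 x y). simpl. field. nra. Qed.

Lemma chain_cost_exit x0 delta L :
  (forall x', d x0 x' < delta -> L <= ell x') ->
  forall c x', d x0 x' < delta ->
  L <= lam * chain_cost x' c \/
  exists y c', delta <= d x0 y /\
    lam * chain_cost y c' - L <= (1 + lam * d x' y) * (lam * chain_cost x' c - L).
Proof.
  intros HL c. induction c as [|y c IH]; intros x' Hx'.
  - left. simpl. replace (lam * (ell x' / lam)) with (ell x') by (field; lra). auto.
  - set (A := lam * chain_cost x' (y :: c) - L).
    set (A' := lam * chain_cost y c - L).
    assert (Htail : A' <= (1 + lam * d x' y) * A).
    { assert (E : (1 + lam * d x' y) * A = lam * d x' y * (ell x' - L) + A').
      { unfold A, A'.
        transitivity (lam * (chain_cost x' (y :: c) * (1 + lam * d x' y))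
                      - L * (1 + lam * d x' y)); [ring|].
        rewrite chain_cost_cons. ring. }
      assert (0 <= lam * d x' y * (ell x' - L)).
      { pose proof (HL x' Hx'). pose proof (dist_ge0 x' y).
        apply Rmult_le_pos; [apply Rmult_le_pos|]; lra. }
      lra. }
    assert (Hfactor : 0 < 1 + lam * d x' y) by (pose proof (dist_ge0 x' y); nra).
    destruct (Rlt_le_dec (d x0 y) delta) as [Hin|Hout].
    2: { right. exists y, c. auto. }
    destruct (Rle_lt_dec 0 A) as [HA|HA]; [left; unfold A in HA; lra|].
    destruct (IH y Hin) as [Hleft|[y' [c' [Hy' Hle]]]].
    + exfalso. unfold A' in Htail. nra.
    + right. exists y', c'. split; [exact Hy'|].
      fold A' in Hle. fold A.
      pose proof (dist_ge0 x' y). pose proof (dist_ge0 y y').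
      assert (H1 : (1 + lam * d y y') * A' <= (1 + lam * d y y') * ((1 + lam * d x' y) * A))
        by (apply Rmult_le_compat_l; nra).
      assert (H2 : 0 <= lam * lam * d x' y * d y y') by
        (repeat apply Rmult_le_pos; lra).
      assert (H3 : lam * d x' y' <= lam * d x' y + lam * d y y').
      { rewrite <- Rmult_plus_distr_l. apply Rmult_le_compat_l; [lra|apply dist_triangle]. }
      nra.
Qed.

Definition chain_costs (x : X) (e : R) : Prop := exists c, e = chain_cost x c.

Lemma chain_costs_inhabited x : exists e, chain_costs x e.
Proof. now exists (chain_cost x nil), nil. Qed.

Lemma chain_costs_nonneg x e : chain_costs x e -> 0 <= e.
Proof. intros [c ->]. apply chain_cost_nonneg. Qed.

Definition chain_value (x : X) : R := real_inf (chain_costs x).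

Lemma chain_value_le x c : chain_value x <= chain_cost x c.
Proof.
  apply (real_inf_le _ (chain_costs_inhabited x) (chain_costs_nonneg x)). now exists c.
Qed.

Lemma chain_value_approx x eta : 0 < eta ->
  exists c, chain_cost x c < chain_value x + eta.
Proof.
  intro Heta.
  destruct (real_inf_approx _ (chain_costs_inhabited x) (chain_costs_nonneg x) eta Heta)
    as [e [[c ->] Hc]].
  now exists c.
Qed.

Lemma chain_value_nonneg x : 0 <= chain_value x.
Proof. exact (real_inf_nonneg _ (chain_costs_inhabited x) (chain_costs_nonneg x)). Qed.

Lemma chain_value_bound x : lam * chain_value x <= ell x.
Proof.
  pose proof (chain_value_le x nil) as H. simpl in H.
  apply (Rmult_le_compat_l lam) in H; [|lra].
  replace (lam * (ell x / lam)) with (ell x) in H by (field; lra). exact H.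
Qed.

Lemma chain_value_slope x y :
  chain_value x <= chain_value y + (ell x - lam * chain_value x) * d x y.
Proof.
  apply Rle_plus_epsilon. intros eta Heta.
  destruct (chain_value_approx y eta Heta) as [c Hc].
  pose proof (chain_value_le x (y :: c)) as H.
  pose proof (chain_cost_cons x y c). pose proof (dist_ge0 x y).
  assert (0 <= lam * d x y) by (apply Rmult_le_pos; lra).
  apply (Rmult_le_compat_r (1 + lam * d x y)) in H; nra.
Qed.

Lemma chain_value_exit x delta L eta :
  (forall x', d x x' < delta -> L <= ell x') -> 0 < delta -> 0 < eta ->
  L < lam * (chain_value x + eta) \/
  exists y, delta <= d x y /\
    lam * chain_value y - L < (1 + lam * d x y) * (lam * (chain_value x + eta) - L).
Proof.
  intros HL Hdelta Heta.
  destruct (chain_value_approx x eta Heta) as [c Hc].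
  assert (Hcost : lam * chain_cost x c < lam * (chain_value x + eta))
    by (apply Rmult_lt_compat_l; lra).
  destruct (chain_cost_exit x delta L HL c x) as [Hstay|[y [c' [Hy Hle]]]].
  - rewrite dist_self. exact Hdelta.
  - left. lra.
  - right. exists y. split; [exact Hy|].
    pose proof (chain_value_le y c').
    assert (lam * chain_value y <= lam * chain_cost y c') by (apply Rmult_le_compat_l; lra).
    assert (Hfactor : 0 < 1 + lam * d x y) by (pose proof (dist_ge0 x y); nra).
    assert ((1 + lam * d x y) * (lam * chain_cost x c - L)
            < (1 + lam * d x y) * (lam * (chain_value x + eta) - L))
      by (apply Rmult_lt_compat_l; lra).
    lra.
Qed.

Lemma chain_value_descent x z : 0 < z < ell x - lam * chain_value x ->
  exists y, y <> x /\ chain_value y + z * d x y <= chain_value x.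
Proof.
  intro Hz.
  set (eps := (ell x - lam * chain_value x - z) / 3).
  assert (Heps_def : ell x - lam * chain_value x = z + 3 * eps) by (unfold eps; lra).
  clearbody eps.
  assert (Heps : 0 < eps) by lra.
  destruct (ell_lsc x (ell x - eps)) as [delta [Hdelta Hball]]; [simpl; lra|].
  assert (HL : forall x', d x x' < delta -> ell x - eps <= ell x').
  { intros x' H. specialize (Hball x' H). simpl in Hball. lra. }
  set (eta := Rmin (eps / lam) (eps * delta)).
  assert (Heta_lam : lam * eta <= eps).
  { pose proof (Rmin_l (eps / lam) (eps * delta)) as H.
    apply (Rmult_le_compat_l lam) in H; [|lra].
    replace (lam * (eps / lam)) with eps in H by (field; lra). exact H. }
  assert (Heta_delta : eta <= eps * delta) by apply Rmin_r.
  assert (Heta : 0 < eta).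
  { apply Rmin_glb_lt; [apply Rdiv_lt_0_compat|apply Rmult_lt_0_compat]; lra. }
  destruct (chain_value_exit x delta (ell x - eps) eta HL Hdelta Heta) as [Hstay|[y [Hr Hle]]].
  { exfalso. lra. }
  exists y. split; [apply dist_pos_neq; lra|].
  set (r := d x y) in *. clearbody r.
  assert (Hgap : lam * (chain_value x + eta) - (ell x - eps)
                 = - (z + eps) - (eps - lam * eta)) by lra.
  rewrite Hgap in Hle.
  assert (lam * r * (eps - lam * eta) >= 0) by (apply Rle_ge, Rmult_le_pos; nra).
  assert (lam * eta <= lam * (eps * r)).
  { apply Rmult_le_compat_l; [lra|]. apply (Rle_trans _ _ _ Heta_delta). nra. }
  assert (Hdrop : lam * (chain_value y + z * r) < lam * chain_value x) by nra.
  apply Rmult_lt_reg_l in Hdrop; lra.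
Qed.

Lemma has_LSC_solution_pos :
  inf_is_zero (fun x => Finite (ell x)) -> has_LSC_solution d lam ell.
Proof.
  intros [_ Hinf]. apply (has_LSC_solution_of_descent lam ell chain_value).
  - apply chain_value_nonneg.
  - intros eps Heps. destruct (Hinf (lam * eps)) as [x Hx]; [nra|].
    exists x. simpl in Hx. pose proof (chain_value_bound x). nra.
  - apply chain_value_bound.
  - apply chain_value_slope.
  - intros x z Hz. now apply chain_value_descent.
Qed.

End Discounted.

Section Undiscounted.

Variable ell : X -> R.
Hypothesis ell_nonneg : forall x, 0 <= ell x.
Hypothesis ell_lsc : lsc_R d ell.
Hypothesis ell_H0 : H0 d ell.

Definition path_term (s : nat -> X) (n : nat) : R := ell (s n) * d (s n) (s (S n)).

Definition path_cost (s : nat -> X) : R := Series (path_term s).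

Definition admissible (s : nat -> X) : Prop :=
  ex_series (path_term s) /\ is_lim_seq (fun n => ell (s n)) 0.

Definition scons (x : X) (s : nat -> X) (n : nat) : X :=
  match n with O => x | S k => s k end.

Lemma path_term_nonneg s n : 0 <= path_term s n.
Proof. apply Rmult_le_pos; [apply ell_nonneg|apply dist_ge0]. Qed.

Lemma admissible_scons x s : admissible s ->
  admissible (scons x s) /\ path_cost (scons x s) = ell x * d x (s O) + path_cost s.
Proof.
  intros [Hex Hlim].
  assert (Hex' : ex_series (path_term (scons x s))) by (apply ex_series_incr_1; exact Hex).
  split; [split; [exact Hex'|apply is_lim_seq_incr_1; exact Hlim]|].
  unfold path_cost. rewrite (Series_incr_1 _ Hex'). reflexivity.
Qed.

Lemma admissible_shift s k : admissible s ->
  admissible (fun n => s (S k + n)%nat) /\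
  path_cost s = sum_f_R0 (path_term s) k + path_cost (fun n => s (S k + n)%nat).
Proof.
  intros [Hex Hlim].
  assert (Hterm : forall n, path_term s (S k + n) = path_term (fun n => s (S k + n)%nat) n)
    by (intro n; unfold path_term; now rewrite Nat.add_succ_r).
  split; [split|].
  - apply (ex_series_ext _ _ Hterm). now apply ex_series_incr_n.
  - apply (is_lim_seq_incr_n _ (S k)) in Hlim.
    apply (is_lim_seq_ext _ _ _
             (fun n => f_equal (fun m => ell (s m)) (Nat.add_comm n (S k))) Hlim).
  - unfold path_cost. rewrite (Series_incr_n _ (S k)); [|lia|exact Hex].
    f_equal. now apply Series_ext.
Qed.

Lemma path_partial_sum_ge s L k : 0 <= L -> (forall i, (i <= k)%nat -> L <= ell (s i)) ->
  L * d (s O) (s (S k)) <= sum_f_R0 (path_term s) k.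
Proof.
  intros HL. induction k as [|k IH]; intros Hell; simpl; unfold path_term.
  - apply Rmult_le_compat_r; [apply dist_ge0|]. apply Hell. lia.
  - specialize (IH (fun i Hi => Hell i (le_S _ _ Hi))).
    pose proof (dist_triangle (s O) (s (S k)) (s (S (S k)))).
    assert (L * d (s (S k)) (s (S (S k))) <= ell (s (S k)) * d (s (S k)) (s (S (S k)))).
    { apply Rmult_le_compat_r; [apply dist_ge0|]. apply Hell. lia. }
    unfold path_term in IH. nra.
Qed.

Lemma admissible_first_exit s x delta L : admissible s -> s O = x -> 0 < delta -> 0 < L ->
  (forall x', d x x' < delta -> L <= ell x') ->
  exists k, delta <= d x (s (S k)) /\ forall i, (i <= k)%nat -> d x (s i) < delta.
Proof.
  intros [_ Hlim] Hs0 Hdelta HL Hball.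
  assert (Hexit : exists n, delta <= d x (s n)).
  { apply is_lim_seq_spec in Hlim.
    destruct (Hlim (mkposreal L HL)) as [N HN].
    exists N. specialize (HN N (le_n N)). simpl in HN. rewrite Rminus_0_r in HN.
    apply Rabs_def2 in HN. apply Rnot_lt_le. intro Hin. specialize (Hball _ Hin). lra. }
  destruct Hexit as [n Hn].
  destruct (least_index (fun n => delta <= d x (s n)) n Hn) as [[|k] [Hout Hin]].
  - rewrite Hs0, dist_self in Hout. lra.
  - exists k. split; [exact Hout|]. intros i Hi. apply Rnot_le_lt, Hin. lia.
Qed.

Definition path_costs (x : X) (e : R) : Prop :=
  exists s, s O = x /\ admissible s /\ e = path_cost s.

Lemma path_costs_inhabited x : exists e, path_costs x e.
Proof.
  destruct ell_H0 as [xs Hxs].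
  destruct (admissible_scons x xs Hxs) as [Hadm _].
  now exists (path_cost (scons x xs)), (scons x xs).
Qed.

Lemma path_costs_nonneg x e : path_costs x e -> 0 <= e.
Proof. intros [s [_ [[Hex _] ->]]]. apply Series_nonneg; [apply path_term_nonneg|exact Hex]. Qed.

Definition path_value (x : X) : R := real_inf (path_costs x).

Lemma path_value_le s : admissible s -> path_value (s O) <= path_cost s.
Proof.
  intro Hs. apply (real_inf_le _ (path_costs_inhabited _) (path_costs_nonneg _)).
  now exists s.
Qed.

Lemma path_value_approx x eta : 0 < eta ->
  exists s, s O = x /\ admissible s /\ path_cost s < path_value x + eta.
Proof.
  intro Heta.
  destruct (real_inf_approx _ (path_costs_inhabited x) (path_costs_nonneg x) eta Heta)
    as [e [[s [Hs0 [Hs ->]]] Hlt]].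
  now exists s.
Qed.

Lemma path_value_nonneg x : 0 <= path_value x.
Proof. exact (real_inf_nonneg _ (path_costs_inhabited x) (path_costs_nonneg x)). Qed.

Lemma path_value_slope x y : path_value x <= path_value y + ell x * d x y.
Proof.
  apply Rle_plus_epsilon. intros eta Heta.
  destruct (path_value_approx y eta Heta) as [s [Hs0 [Hs Hlt]]].
  destruct (admissible_scons x s Hs) as [Hadm Hcost].
  pose proof (path_value_le _ Hadm) as Hle. simpl in Hle. rewrite Hcost, Hs0 in Hle. lra.
Qed.

Lemma path_value_descent x z : 0 < z < ell x ->
  exists y, y <> x /\ path_value y + z * d x y <= path_value x.
Proof.
  intro Hz. set (eps := (ell x - z) / 2).
  assert (Heps_def : ell x = z + 2 * eps) by (unfold eps; lra). clearbody eps.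
  destruct (ell_lsc x (ell x - eps)) as [delta [Hdelta Hball]]; [simpl; lra|].
  assert (HL : forall x', d x x' < delta -> z + eps <= ell x').
  { intros x' H. specialize (Hball x' H). simpl in Hball. lra. }
  destruct (path_value_approx x (eps * delta)) as [s [Hs0 [Hs Hlt]]]; [nra|].
  destruct (admissible_first_exit s x delta (z + eps) Hs Hs0 Hdelta ltac:(lra) HL)
    as [k [Hout Hin]].
  assert (Hprefix : (z + eps) * d x (s (S k)) <= sum_f_R0 (path_term s) k).
  { rewrite <- Hs0. apply path_partial_sum_ge; [lra|]. intros i Hi. apply HL, Hin, Hi. }
  destruct (admissible_shift s k Hs) as [Htail Hsplit].
  pose proof (path_value_le _ Htail) as Hrest. cbv beta in Hrest. rewrite Nat.add_0_r in Hrest.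
  exists (s (S k)). split; [apply dist_pos_neq; lra|].
  assert (eps * delta <= eps * d x (s (S k))) by (apply Rmult_le_compat_l; lra).
  lra.
Qed.

Lemma path_value_inf eps : 0 < eps -> exists x, path_value x < eps.
Proof.
  intro Heps. destruct ell_H0 as [xs Hxs]. change (admissible xs) in Hxs.
  pose proof (Series_correct _ (proj1 Hxs)) as Hsum. apply is_series_Reals in Hsum.
  destruct (Hsum eps Heps) as [N HN]. specialize (HN N (le_n N)).
  unfold R_dist in HN. apply Rabs_def2 in HN.
  destruct (admissible_shift xs N Hxs) as [Htail Hsplit].
  pose proof (path_value_le _ Htail) as Hle. cbv beta in Hle.
  exists (xs (S N + 0)%nat). unfold path_cost in *. lra.
Qed.

Lemma has_LSC_solution_H0 : has_LSC_solution d 0 ell.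
Proof.
  apply (has_LSC_solution_of_descent 0 ell path_value).
  - apply path_value_nonneg.
  - apply path_value_inf.
  - intro x. rewrite Rmult_0_l. apply ell_nonneg.
  - intros x y. rewrite Rmult_0_l, Rminus_0_r. apply path_value_slope.
  - intros x z. rewrite Rmult_0_l, Rminus_0_r. apply path_value_descent.
Qed.

End Undiscounted.

Section Ekeland.

Variables (u : X -> R) (alpha : R).
Hypothesis u_lsc : lsc_R d u.
Hypothesis u_nonneg : forall x, 0 <= u x.
Hypothesis alpha_pos : 0 < alpha.

Definition ekeland_set (z y : X) : Prop := u y + alpha * d z y <= u z.

Lemma ekeland_set_refl z : ekeland_set z z.
Proof. unfold ekeland_set. rewrite dist_self. lra. Qed.

Lemma ekeland_set_trans z y w : ekeland_set z y -> ekeland_set y w -> ekeland_set z w.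
Proof.
  unfold ekeland_set. intros Hzy Hyw. pose proof (dist_triangle z y w).
  assert (alpha * d z w <= alpha * (d z y + d y w)) by (apply Rmult_le_compat_l; lra).
  lra.
Qed.

Lemma ekeland_set_chain (z : nat -> X) : (forall k, ekeland_set (z k) (z (S k))) ->
  forall k j, (k <= j)%nat -> ekeland_set (z k) (z j).
Proof.
  intros Hstep k j Hkj. induction Hkj as [|j _ IH]; [apply ekeland_set_refl|].
  exact (ekeland_set_trans _ _ _ IH (Hstep j)).
Qed.

Lemma ekeland_set_closed z (s : nat -> X) x k :
  (forall eps, 0 < eps -> exists N, forall n, (N <= n)%nat -> d (s n) x < eps) ->
  (forall n, (k <= n)%nat -> ekeland_set z (s n)) -> ekeland_set z x.
Proof.
  intros Hlim Hs. apply Rnot_lt_le. intro Hgt.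
  set (gap := u x + alpha * d z x - u z) in *.
  assert (Hgap : 0 < gap) by (unfold gap; lra).
  destruct (u_lsc x (u x - gap / 2)) as [delta [Hdelta Hball]]; [simpl; lra|].
  destruct (Hlim (Rmin delta (gap / (4 * alpha)))) as [N HN].
  { apply Rmin_glb_lt; [exact Hdelta|apply Rdiv_lt_0_compat; lra]. }
  set (n := Nat.max N k).
  specialize (HN n (Nat.le_max_l _ _)).
  assert (Hun : u x - gap / 2 < u (s n)).
  { apply (Hball (s n)). rewrite dist_sym. exact (Rlt_le_trans _ _ _ HN (Rmin_l _ _)). }
  assert (Hdn : alpha * d (s n) x < gap / 4).
  { replace (gap / 4) with (alpha * (gap / (4 * alpha))) by (field; lra).
    apply Rmult_lt_compat_l; [lra|]. exact (Rlt_le_trans _ _ _ HN (Rmin_r _ _)). }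
  specialize (Hs n (Nat.le_max_r _ _)). unfold ekeland_set in Hs.
  assert (alpha * d z x <= alpha * (d z (s n) + d (s n) x))
    by (apply Rmult_le_compat_l; [lra|apply dist_triangle]).
  unfold gap in *. lra.
Qed.

Lemma ekeland_step k z : exists y, ekeland_set z y /\
  forall w, ekeland_set y w -> alpha * d y w < (/ 2) ^ k.
Proof.
  set (E := fun e => exists y, ekeland_set z y /\ e = u y).
  assert (HE : exists e, E e) by (exists (u z), z; split; [apply ekeland_set_refl|reflexivity]).
  assert (HE0 : forall e, E e -> 0 <= e) by (intros e [y [_ ->]]; apply u_nonneg).
  destruct (real_inf_approx E HE HE0 _ (pow_half_pos k)) as [e [[y [Hzy ->]] Hy]].
  exists y. split; [exact Hzy|]. intros w Hyw.
  assert (Hw : real_inf E <= u w).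
  { apply (real_inf_le E HE HE0). exists w.
    split; [exact (ekeland_set_trans _ _ _ Hzy Hyw)|reflexivity]. }
  unfold ekeland_set in Hyw. lra.
Qed.

Lemma ekeland_chain p : exists z : nat -> X, z O = p /\
  (forall k, ekeland_set (z k) (z (S k))) /\
  (forall k w, ekeland_set (z (S k)) w -> alpha * d (z (S k)) w < (/ 2) ^ k).
Proof.
  destruct (choice (fun (kz : nat * X) y => ekeland_set (snd kz) y /\
                      forall w, ekeland_set y w -> alpha * d y w < (/ 2) ^ fst kz))
    as [f Hf]; [intros [k z]; apply ekeland_step|].
  exists (fix z k := match k with O => p | S k => f (k, z k) end).
  split; [reflexivity|split]; intro k; apply (Hf (k, _)).
Qed.

Hypothesis d_complete : metric_complete d.

Theorem ekeland_variational_principle p : exists x,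
  u x + alpha * d p x <= u p /\ forall y, y <> x -> u x < u y + alpha * d x y.
Proof.
  destruct (ekeland_chain p) as [z [Hz0 [Hstep Hdiam]]].
  assert (Hnear : forall k w1 w2, ekeland_set (z (S k)) w1 -> ekeland_set (z (S k)) w2 ->
            alpha * d w1 w2 < 2 * (/ 2) ^ k).
  { intros k w1 w2 H1 H2. pose proof (Hdiam k _ H1). pose proof (Hdiam k _ H2).
    pose proof (dist_triangle w1 (z (S k)) w2) as Htri. rewrite (dist_sym w1 (z (S k))) in Htri.
    assert (alpha * d w1 w2 <= alpha * (d (z (S k)) w1 + d (z (S k)) w2))
      by (apply Rmult_le_compat_l; lra).
    lra. }
  assert (Hcauchy : forall eps, 0 < eps -> exists N, forall m n, (N <= m)%nat -> (N <= n)%nat ->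
            d (z m) (z n) < eps).
  { intros eps Heps. destruct (pow_half_lt (alpha * eps / 2)) as [k Hk]; [nra|].
    exists (S k). intros m n Hm Hn.
    pose proof (Hnear k _ _ (ekeland_set_chain z Hstep _ _ Hm)
                             (ekeland_set_chain z Hstep _ _ Hn)).
    apply (Rmult_lt_reg_l alpha); lra. }
  destruct (d_complete z Hcauchy) as [x Hx].
  assert (Hlimit : forall k, ekeland_set (z k) x)
    by (intro k; apply (ekeland_set_closed _ z x k Hx), ekeland_set_chain, Hstep).
  exists x. split; [rewrite <- Hz0; apply Hlimit|].
  intros y Hy. apply Rnot_le_lt. intro Hxy.
  destruct (pow_half_lt (alpha * d x y / 2)) as [k Hk].
  { pose proof (dist_pos x y Hy). nra. }
  pose proof (Hnear k x y (Hlimit (S k)) (ekeland_set_trans _ _ _ (Hlimit (S k)) Hxy)).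
  lra.
Qed.

End Ekeland.

Lemma is_solution_finite lam ell u : 0 <= lam -> is_solution d lam ell u ->
  forall x, u x = Finite (real (u x)).
Proof.
  intros Hlam [_ [[Hge _] Heq]] x. specialize (Heq x). specialize (Hge x).
  unfold global_slope in Heq. destruct (u x) as [a| |]; [reflexivity| |contradiction].
  (* Coquelicot sets [-oo + +oo = 0], so [lam >= 0] is what rules out [u x = +oo]. *)
  exfalso. destruct (Rbar_mult lam p_infty) eqn:Hm; try discriminate.
  unfold Rbar_mult, Rbar_mult' in Hm.
  destruct (Rle_dec 0 lam) as [H|H]; [|lra].
  destruct (Rle_lt_or_eq_dec 0 lam H); discriminate.
Qed.

Section Necessity.

Variable ell : X -> R.
Hypothesis ell_nonneg : forall x, 0 <= ell x.

Lemma H0_of_descent_steps (v : X -> R) (p : X) : (forall x, 0 <= v x) ->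
  (forall n q, exists x, v x + (/ 2) ^ n * d q x <= v q /\ ell x <= (/ 2) ^ n) ->
  H0 d ell.
Proof.
  intros Hv Hstep.
  destruct (choice (fun (nq : nat * X) x =>
              v x + (/ 2) ^ fst nq * d (snd nq) x <= v (snd nq) /\ ell x <= (/ 2) ^ fst nq))
    as [f Hf]; [intros [n q]; apply Hstep|].
  set (xs := fix xs n := match n with O => f (O, p) | S n => f (S n, xs n) end).
  assert (Hell : forall n, ell (xs n) <= (/ 2) ^ n) by (intros [|n]; apply (Hf (_, _))).
  assert (Hdec : forall n, v (xs (S n)) + (/ 2) ^ S n * d (xs n) (xs (S n)) <= v (xs n))
    by (intro n; apply (Hf (S n, xs n))).
  exists xs. split.
  - apply (ex_series_telescoping_bound _ (fun n => 2 * v (xs n))); intro n.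
    + apply Rmult_le_pos; [apply ell_nonneg|apply dist_ge0].
    + specialize (Hv (xs n)). lra.
    + specialize (Hdec n). simpl pow in Hdec. pose proof (dist_ge0 (xs n) (xs (S n))).
      assert (ell (xs n) * d (xs n) (xs (S n)) <= (/ 2) ^ n * d (xs n) (xs (S n)))
        by (apply Rmult_le_compat_r; [lra|apply Hell]).
      lra.
  - apply (is_lim_seq_le_le (fun _ => 0) _ (fun n => (/ 2) ^ n)).
    + intro n. split; [apply ell_nonneg|apply Hell].
    + apply is_lim_seq_const.
    + apply is_lim_seq_geom. rewrite Rabs_right; lra.
Qed.

Lemma solution_slope_le (v : X -> R) x alpha :
  is_solution d 0 ell (fun x => Finite (v x)) -> 0 <= alpha ->
  (forall y, y <> x -> v x <= v y + alpha * d x y) -> ell x <= alpha.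
Proof.
  intros [_ [_ Heq]] Halpha Hslope. specialize (Heq x).
  rewrite Rbar_mult_0_l, Rbar_plus_0_l in Heq.
  pose proof (global_slope_le v x alpha Halpha Hslope) as Hle.
  rewrite Heq in Hle. exact Hle.
Qed.

Lemma H0_of_is_solution u : metric_complete d -> is_solution d 0 ell u -> H0 d ell.
Proof.
  intros Hcomplete Hsol.
  pose proof (is_solution_finite 0 ell u (Rle_refl 0) Hsol) as Hfin.
  set (v := fun x => real (u x)).
  assert (Huv : u = fun x => Finite (v x))
    by (apply functional_extensionality; exact Hfin).
  clearbody v. subst u.
  pose proof Hsol as [Hlsc [[Hv Hinf] _]].
  destruct (Hinf 1 Rlt_0_1) as [p _].
  apply (H0_of_descent_steps v p Hv). intros n q.
  destruct (ekeland_variational_principle v ((/ 2) ^ n) Hlsc Hv (pow_half_pos n) Hcomplete q)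
    as [x [Hdesc Hmin]].
  exists x. split; [exact Hdesc|].
  apply (solution_slope_le v x); [exact Hsol|apply Rlt_le, pow_half_pos|].
  intros y Hy. apply Rlt_le, Hmin, Hy.
Qed.

End Necessity.

End MetricSpace.

Theorem corollary3p8 (X : Type) (d : X -> X -> R) (ell : X -> R) :
  is_metric d ->
  (forall x, 0 <= ell x) ->
  lsc_R d ell ->
  inf_is_zero (fun x => Finite (ell x)) ->
  (forall lam, 0 < lam -> has_LSC_solution d lam ell) /\
  (H0 d ell -> has_LSC_solution d 0 ell) /\
  (metric_complete d -> ((exists u : X -> Rbar, is_solution d 0 ell u) <-> H0 d ell)).
Proof.
  intros Hd Hell Hlsc Hinf. split; [|split].
  - intros lam Hlam. now apply has_LSC_solution_pos.
  - intro HH0. now apply has_LSC_solution_H0.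
  - intro Hcomplete. split.
    + intros [u Hu]. now apply (H0_of_is_solution X d Hd ell Hell u).
    + intro HH0. destruct (has_LSC_solution_H0 X d Hd ell Hell Hlsc HH0) as [v [_ Hv]].
      now exists (fun x => Finite (v x)).
Qed.
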